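(* Let $M$ be a three-holed sphere with $\pi_1(M)=\langle A,B,C: ABC=I\rangle$, where $A,B,C$ represent the three boundary components. For $\rho\in\operatorname{Hom}(\pi_1(M),\mathrm{SU}(2))$ write $a=\operatorname{tr}\rho(A)$, $b=\operatorname{tr}\rho(B)$, $c=\operatorname{tr}\rho(C)$. Then: (1) $\rho$ is $\mathrm{Spin}(2)$ if and only if $a^2+b^2+c^2-abc-4=0$; (2) $\rho$ is $\mathrm{Pin}(2)$ and not $\mathrm{Spin}(2)$ if and only if $a^2+b^2+c^2-abc-4\neq0$ and at least two of the three numbers $\operatorname{tr}\rho(A)$, $\operatorname{tr}\rho(B)$, $\operatorname{tr}\rho(AB)$ are zero.
   Context: Let $p:\mathrm{SU}(2)\to\mathrm{SO}(3)$ be the double cover. $\mathrm{Pin}(2)=p^{-1}(\mathrm{O}(2))$ for a subgroup $\mathrm{O}(2)\subset\mathrm{SO}(3)$, and $\mathrm{Spin}(2)$ is its identity component (a maximal torus of $\mathrm{SU}(2)$). For a subgroup $G\subset\mathrm{SU}(2)$, a representation $\rho$ is said to be $G$ if $\rho(\pi_1(M))$ is contained in some subgroup of $\mathrm{SU}(2)$ isomorphic to (i.e. a conjugate copy of) $G$, and not $G$ if it is contained in no such copy. *)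

From mathcomp Require Import all_boot all_algebra.
From mathcomp Require Import reals.
From mathcomp.real_closed Require Export complex.
Set Implicit Arguments. Unset Strict Implicit. Unset Printing Implicit Defensive.
Import GRing.Theory Num.Theory.
Local Open Scope ring_scope.
Local Open Scope complex_scope.

Section SU2.
Variable R : realType.
Notation C := (R[i]).

Definition adjmx (M : 'M[C]_2) : 'M[C]_2 := (map_mx conjc M)^T.

Definition SU2 (M : 'M[C]_2) : Prop := M *m adjmx M = 1%:M /\ \det M = 1.

(* The standard Spin(2): the diagonal maximal torus {diag(z, z^* ) : |z| = 1} *)
Definition Spin2_std (M : 'M[C]_2) : Prop :=
  SU2 M /\ M 0 1 = 0 /\ M 1 0 = 0.

(* The standard Pin(2) = p^{-1}(O(2)) = Spin(2) u j.Spin(2),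
   j.Spin(2) = antidiagonal elements of SU(2) *)
Definition Pin2_std (M : 'M[C]_2) : Prop :=
  Spin2_std M \/ (SU2 M /\ M 0 0 = 0 /\ M 1 1 = 0).

Definition conj_copy (G : 'M[C]_2 -> Prop) (g : 'M[C]_2) (M : 'M[C]_2) : Prop :=
  exists N, G N /\ M = g *m N *m invmx g.

(* the image rho(pi_1(M)): subgroup of SU(2) generated by
   rho(A) = X, rho(B) = Y, rho(C) = Z *)
Inductive in_image (X Y Z : 'M[C]_2) : 'M[C]_2 -> Prop :=
| img_A : in_image X Y Z X
| img_B : in_image X Y Z Y
| img_C : in_image X Y Z Z
| img_1 : in_image X Y Z 1%:M
| img_mul M N : in_image X Y Z M -> in_image X Y Z N -> in_image X Y Z (M *m N)
| img_inv M : in_image X Y Z M -> in_image X Y Z (invmx M).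

(* rho is G: its image lies in some conjugate copy of G in SU(2) *)
Definition rep_is (G : 'M[C]_2 -> Prop) (X Y Z : 'M[C]_2) : Prop :=
  exists g, SU2 g /\ forall M, in_image X Y Z M -> conj_copy G g M.

End SU2.

(* Identify SU(2) with the unit quaternions q0 + q1 i + q2 j + q3 k (via [qmx]).  Then
   Spin(2) is the circle in span{1, i}, Pin(2) adds the circle in span{j, k}, and
   conjugation by unit quaternions rotates the vector part (q1, q2, q3) arbitrarily.
   For x = rho(A), y = rho(B) the trace polynomial equals -4 |v_x × v_y|^2, so it vanishes
   iff x and y commute, iff their vector parts are parallel, iff a single rotation moves
   both onto the i-axis: this is (1).  For (2): if after a rotation x and y lie in Pin(2)
   but not both in Spin(2), then two of x, y, xy lie in span{j, k}, hence have trace 0.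
   Conversely, two non-commuting pure quaternions are both moved into span{j, k} by a
   rotation taking the normal of their vector parts to the i-axis; when the pure pair is
   (x, xy) or (xy, y), the remaining element y = x^-1 (xy), resp. x = (xy) y^-1, then
   lands in Spin(2). *)

From mathcomp Require Import all_boot all_order all_algebra.
From mathcomp Require Import reals.
From mathcomp.real_closed Require Import complex.
From mathcomp Require Import ring lra.
Import Order.TTheory GRing.Theory Num.Theory.
Local Open Scope ring_scope.
Set Implicit Arguments. Unset Strict Implicit.

(* For X, Y in SL(2) with traces a, b and tr (XY) = c, this is tr (X Y X^-1 Y^-1) - 2. *)
Definition fricke (T : pzRingType) (a b c : T) : T :=
  a ^+ 2 + b ^+ 2 + c ^+ 2 - a * b * c - 4.

Record quat (R : Type) := Quat { q0 : R; q1 : R; q2 : R; q3 : R }.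

Section QuatAlgebra.
Variable R : comPzRingType.
Implicit Types (p q r g u v x y : quat R) (P : quat R -> Prop).

Definition qone : quat R := Quat 1 0 0 0.

Definition qmul p q : quat R :=
  Quat (q0 p * q0 q - q1 p * q1 q - q2 p * q2 q - q3 p * q3 q)
       (q0 p * q1 q + q1 p * q0 q + q2 p * q3 q - q3 p * q2 q)
       (q0 p * q2 q - q1 p * q3 q + q2 p * q0 q + q3 p * q1 q)
       (q0 p * q3 q + q1 p * q2 q - q2 p * q1 q + q3 p * q0 q).

Definition qconj p : quat R := Quat (q0 p) (- q1 p) (- q2 p) (- q3 p).

Definition vdot p q : R := q1 p * q1 q + q2 p * q2 q + q3 p * q3 q.
Definition vnorm2 p : R := vdot p p.
Definition qnorm2 p : R := q0 p ^+ 2 + vnorm2 p.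

Definition qcross p q : quat R :=
  Quat 0 (q2 p * q3 q - q3 p * q2 q) (q3 p * q1 q - q1 p * q3 q)
         (q1 p * q2 q - q2 p * q1 q).

Definition qcomm p q := qmul p q = qmul q p.

Definition qscale (c : R) p : quat R := Quat (c * q0 p) (c * q1 p) (c * q2 p) (c * q3 p).

Definition qtr p : R := 2 * q0 p.

Definition qrot g p := qmul (qmul (qconj g) p) g.

Definition conj_into P x y := exists2 g, qnorm2 g = 1 & P (qrot g x) /\ P (qrot g y).

Definition spin2 p := q2 p = 0 /\ q3 p = 0.
Definition jspin2 p := q0 p = 0 /\ q1 p = 0.
Definition pin2 p := spin2 p \/ jspin2 p.

Definition two_pure x y :=
  (q0 x = 0 /\ q0 y = 0) \/ (q0 x = 0 /\ q0 (qmul x y) = 0) \/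
  (q0 y = 0 /\ q0 (qmul x y) = 0).

Ltac quat_ring :=
  repeat match goal with q : quat _ |- _ => destruct q end;
  rewrite ?/qrot ?/qscale ?/qnorm2 ?/vnorm2 ?/vdot ?/qcross ?/qmul ?/qconj ?/qone /=;
  try congr Quat; ring.

Lemma qmulA p q r : qmul p (qmul q r) = qmul (qmul p q) r. Proof. quat_ring. Qed.
Lemma qmulr1 p : qmul p qone = p. Proof. quat_ring. Qed.
Lemma qmul1r p : qmul qone p = p. Proof. quat_ring. Qed.
Lemma qnorm2_1 : qnorm2 qone = 1. Proof. quat_ring. Qed.
Lemma qconjK p : qconj (qconj p) = p. Proof. quat_ring. Qed.
Lemma qconjM p q : qconj (qmul p q) = qmul (qconj q) (qconj p). Proof. quat_ring. Qed.
Lemma qnorm2M p q : qnorm2 (qmul p q) = qnorm2 p * qnorm2 q. Proof. quat_ring. Qed.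
Lemma qnorm2_conj p : qnorm2 (qconj p) = qnorm2 p. Proof. quat_ring. Qed.
Lemma qmul_conj p : qmul p (qconj p) = Quat (qnorm2 p) 0 0 0. Proof. quat_ring. Qed.
Lemma qconj_mul p : qmul (qconj p) p = Quat (qnorm2 p) 0 0 0. Proof. quat_ring. Qed.

Lemma vdot_q0 p q : vdot p q = q0 p * q0 q - q0 (qmul p q). Proof. quat_ring. Qed.

Lemma q0_rot_norm g p : q0 (qrot g p) = qnorm2 g * q0 p. Proof. quat_ring. Qed.

Section UnitQuat.
Variable g : quat R.
Hypothesis g1 : qnorm2 g = 1.

Lemma qmulV : qmul g (qconj g) = qone. Proof. by rewrite qmul_conj g1. Qed.
Lemma qmulVl : qmul (qconj g) g = qone. Proof. by rewrite qconj_mul g1. Qed.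

Lemma qmulKl p : qmul (qconj g) (qmul g p) = p.
Proof. by rewrite qmulA qmulVl qmul1r. Qed.

Lemma qmulKr p : qmul (qmul p g) (qconj g) = p.
Proof. by rewrite -qmulA qmulV qmulr1. Qed.

Lemma qmulIl p q : qmul g p = qmul g q -> p = q.
Proof. by move=> e; rewrite -(qmulKl p) e qmulKl. Qed.

Lemma qmulIr p q : qmul p g = qmul q g -> p = q.
Proof. by move=> e; rewrite -(qmulKr p) e qmulKr. Qed.

Lemma qrotM p q : qrot g (qmul p q) = qmul (qrot g p) (qrot g q).
Proof. by rewrite /qrot !qmulA qmulKr. Qed.

Lemma qrot1r : qrot g qone = qone.
Proof. by rewrite /qrot qmulr1 qmulVl. Qed.

Lemma qrotK p : qmul (qmul g (qrot g p)) (qconj g) = p.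
Proof. by rewrite /qrot !qmulA qmulV qmul1r -qmulA qmulV qmulr1. Qed.

Lemma qrotKV p : qrot g (qmul (qmul g p) (qconj g)) = p.
Proof. by rewrite /qrot !qmulA qmulVl qmul1r -qmulA qmulVl qmulr1. Qed.

Lemma qrotI p q : qrot g p = qrot g q -> p = q.
Proof. by move=> e; rewrite -(qrotK p) e qrotK. Qed.

Lemma qcomm_rot p q : qcomm (qrot g p) (qrot g q) <-> qcomm p q.
Proof. by rewrite /qcomm -!qrotM; split=> [/qrotI | ->]. Qed.

Lemma qnorm2_rot p : qnorm2 (qrot g p) = qnorm2 p.
Proof. by rewrite !qnorm2M qnorm2_conj g1 mul1r mulr1. Qed.

Lemma q0_rot p : q0 (qrot g p) = q0 p.
Proof. by rewrite q0_rot_norm g1 mul1r. Qed.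

Lemma vdot_rot p q : vdot (qrot g p) (qrot g q) = vdot p q.
Proof. by rewrite !vdot_q0 -qrotM !q0_rot. Qed.

Lemma vnorm2_rot p : vnorm2 (qrot g p) = vnorm2 p.
Proof. exact: vdot_rot. Qed.

End UnitQuat.

Lemma qrot_conj g p : qrot g (qconj p) = qconj (qrot g p).
Proof. by rewrite /qrot !qconjM qconjK qmulA. Qed.

Lemma qcomm_mulr x y : qnorm2 x = 1 -> qcomm x (qmul x y) <-> qcomm x y.
Proof. by move=> x1; rewrite /qcomm -qmulA; split=> [/(qmulIl x1) | ->]. Qed.

Lemma qcomm_mull x y : qnorm2 y = 1 -> qcomm (qmul x y) y <-> qcomm x y.
Proof. by move=> y1; rewrite /qcomm qmulA; split=> [/(qmulIr y1) | ->]. Qed.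

Lemma qrot1l p : qrot qone p = p. Proof. quat_ring. Qed.

Lemma qnorm2_scale c p : qnorm2 (qscale c p) = c ^+ 2 * qnorm2 p. Proof. quat_ring. Qed.

Lemma qrot_scale c g p : qrot (qscale c g) p = qscale (c ^+ 2) (qrot g p). Proof. quat_ring. Qed.

Lemma spin2_scale c p : spin2 p -> spin2 (qscale c p).
Proof. by case: p => a b d e [/= -> ->]; rewrite /spin2 /= mulr0. Qed.

Lemma spin2_one : spin2 qone. Proof. by []. Qed.

Lemma spin2_mul u v : spin2 u -> spin2 v -> spin2 (qmul u v).
Proof. by case: u v => [a b c d] [e f g h] [/= -> ->] [/= -> ->]; split; rewrite /=; ring. Qed.

Lemma spin2_jspin2_mul u v : spin2 u -> jspin2 v -> jspin2 (qmul u v).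
Proof. by case: u v => [a b c d] [e f g h] [/= -> ->] [/= -> ->]; split; rewrite /=; ring. Qed.

Lemma jspin2_spin2_mul u v : jspin2 u -> spin2 v -> jspin2 (qmul u v).
Proof. by case: u v => [a b c d] [e f g h] [/= -> ->] [/= -> ->]; split; rewrite /=; ring. Qed.

Lemma jspin2_mul u v : jspin2 u -> jspin2 v -> spin2 (qmul u v).
Proof. by case: u v => [a b c d] [e f g h] [/= -> ->] [/= -> ->]; split; rewrite /=; ring. Qed.

Lemma spin2_conj p : spin2 p -> spin2 (qconj p).
Proof. by case: p => a b c d [/= -> ->]; rewrite /spin2 /= oppr0. Qed.

Lemma jspin2_conj p : jspin2 p -> jspin2 (qconj p).
Proof. by case: p => a b c d [/= -> ->]; rewrite /jspin2 /= oppr0. Qed.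

Lemma pin2_mul u v : pin2 u -> pin2 v -> pin2 (qmul u v).
Proof.
case=> [su | ju] [sv | jv].
- by left; apply: spin2_mul.
- by right; apply: spin2_jspin2_mul.
- by right; apply: jspin2_spin2_mul.
- by left; apply: jspin2_mul.
Qed.

Lemma pin2_conj p : pin2 p -> pin2 (qconj p).
Proof. by case=> [/spin2_conj | /jspin2_conj]; [left | right]. Qed.

Lemma spin2_comm u v : spin2 u -> spin2 v -> qcomm u v.
Proof.
case: u v => [a b c d] [e f g h] [/= -> ->] [/= -> ->].
by rewrite /qcomm /qmul /=; congr Quat; ring.
Qed.

Lemma fricke_qtr x y : qnorm2 x = 1 -> qnorm2 y = 1 ->
  fricke (qtr x) (qtr y) (qtr (qmul x y)) = -4 * vnorm2 (qcross x y).
Proof.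
move=> x1 y1; transitivity (-4 * vnorm2 (qcross x y) - 4 * ((1 - qnorm2 x) * vnorm2 y
  + (1 - qnorm2 y) * vnorm2 x + (1 - qnorm2 x) * (1 - qnorm2 y))).
  by rewrite /fricke /qtr; quat_ring.
by rewrite x1 y1 subrr; ring.
Qed.

End QuatAlgebra.

Arguments qone {R}.
Arguments spin2 {R}.
Arguments jspin2 {R}.
Arguments pin2 {R}.
Arguments spin2_one {R}.
Arguments qnorm2_1 {R}.

Section QuatOrdered.
Variable R : realFieldType.
Implicit Types (p g n u v x y a : quat R).

Lemma vnorm2_eq0 p : vnorm2 p = 0 <-> [/\ q1 p = 0, q2 p = 0 & q3 p = 0].
Proof.
case: p => a b c d; rewrite /vnorm2 /vdot /=; split=> [h | [-> -> ->]]; last by ring.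
by split; nra.
Qed.

Lemma vnorm2_spin2 p : vnorm2 p = 0 -> spin2 p.
Proof. by case/vnorm2_eq0. Qed.

Lemma qcomm_cross x y : qcomm x y <-> vnorm2 (qcross x y) = 0.
Proof.
rewrite vnorm2_eq0; case: x y => [a b c d] [e f g h]; rewrite /qcomm /qmul /=.
by split=> [[e1 e2 e3] | [c1 c2 c3]]; [split; lra | congr Quat; lra].
Qed.

Lemma fricke_eq0 x y : qnorm2 x = 1 -> qnorm2 y = 1 ->
  fricke (qtr x) (qtr y) (qtr (qmul x y)) = 0 <-> qcomm x y.
Proof.
move=> x1 y1; rewrite fricke_qtr // qcomm_cross.
by split=> [/eqP | ->]; rewrite ?mulr0 // mulf_eq0 oppr_eq0 pnatr_eq0 => /eqP.
Qed.

Lemma spin2_comm_spin2 u v : spin2 u -> q1 u != 0 -> qcomm u v -> spin2 v.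
Proof.
case: u v => [a b c d] [e f g h] [/= -> ->] b0 [_ _ e2 e3].
by split; apply/eqP; rewrite -(mulIr_eq0 _ (mulIf b0)) /=; apply/eqP; lra.
Qed.

Lemma qrot_axis g n : qnorm2 g = 1 -> spin2 (qrot g n) -> vnorm2 n != 0 ->
  q1 (qrot g n) != 0.
Proof.
move=> g1 [s2 s3]; rewrite -(vnorm2_rot g1) /vnorm2 /vdot s2 s3.
by apply: contra => /eqP ->; rewrite !mulr0 !addr0.
Qed.

Lemma jspin2_perp g a n : qnorm2 g = 1 -> spin2 (qrot g n) -> vnorm2 n != 0 ->
  q0 a = 0 -> vdot a n = 0 -> jspin2 (qrot g a).
Proof.
move=> g1 sn nn a0 an; split; first by rewrite q0_rot.
have t0 := qrot_axis g1 sn nn.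
have := vdot_rot g1 a n; rewrite an /vdot; case: sn => -> ->.
by rewrite !mulr0 !addr0 => /eqP; rewrite mulf_eq0 (negPf t0) orbF => /eqP.
Qed.

End QuatOrdered.

Section QuatRcf.
Variable R : rcfType.
Implicit Types (q g n x y a b : quat R).

Lemma spin2_normalize q n : qnorm2 q != 0 -> spin2 (qrot q n) ->
  exists2 g, qnorm2 g = 1 & spin2 (qrot g n).
Proof.
move=> q0 sq; have q_gt0 : 0 < qnorm2 q.
  by rewrite lt0r q0 /qnorm2 /vnorm2 /vdot; nra.
set m := Num.sqrt (qnorm2 q); have m0 : m != 0 by rewrite sqrtr_eq0 -ltNge.
exists (qscale m^-1 q); last by rewrite qrot_scale; exact: spin2_scale.
by rewrite qnorm2_scale exprVn sqr_sqrtr ?ltW // mulVf.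
Qed.

Lemma spin2_align n : exists2 g, qnorm2 g = 1 & spin2 (qrot g n).
Proof.
have [n23 | n23] := boolP ((q2 n == 0) && (q3 n == 0)).
  by exists qone; rewrite ?qnorm2_1 // qrot1l; case/andP: n23 => /eqP ? /eqP.
set s := Num.sqrt (vnorm2 n).
have s2 : s ^+ 2 = vnorm2 n by rewrite sqr_sqrtr // /vnorm2 /vdot; nra.
(* With [v] the vector part of [n] and [s = |v|], rotating by [s - v i] turns [v] into [s i]. *)
apply: (@spin2_normalize (Quat (s + q1 n) 0 (- q3 n) (q2 n))).
  apply: contra n23; rewrite /qnorm2 /vnorm2 /vdot /= mulrNN mul0r add0r -!expr2 => /eqP h.
  have := sqr_ge0 (s + q1 n); have := sqr_ge0 (q2 n); have := sqr_ge0 (q3 n).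
  move=> *; rewrite -[q2 n == 0]sqrf_eq0 -[q3 n == 0]sqrf_eq0.
  by apply/andP; split; apply/eqP; lra.
have s2n e : e * (s ^+ 2 - vnorm2 n) = 0 by rewrite s2 subrr mulr0.
split; [apply: etrans _ (s2n (q2 n)) | apply: etrans _ (s2n (q3 n))];
  by rewrite /qrot /qmul /vnorm2 /vdot /=; ring.
Qed.

Lemma conj_into_spin2 x y : conj_into spin2 x y <-> qcomm x y.
Proof.
split=> [[g g1 [sx sy]] | cxy]; first by apply/(qcomm_rot g1); exact: spin2_comm.
have [x0 | x_ne0] := eqVneq (vnorm2 x) 0.
  have [g g1 sy] := spin2_align y; exists g => //; split => //.
  by apply: vnorm2_spin2; rewrite (vnorm2_rot g1).
have [g g1 sx] := spin2_align x; exists g => //; split => //.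
by apply: (spin2_comm_spin2 sx (qrot_axis g1 sx x_ne0)); apply/(qcomm_rot g1).
Qed.

Lemma conj_into_jspin2 a b : q0 a = 0 -> q0 b = 0 -> ~ qcomm a b -> conj_into jspin2 a b.
Proof.
move=> a0 b0 nab; have n_ne0 : vnorm2 (qcross a b) != 0.
  by apply/eqP; rewrite -qcomm_cross.
have [g g1 sn] := spin2_align (qcross a b).
by exists g => //; split; apply: (jspin2_perp g1 sn n_ne0) => //; rewrite /vdot /=; ring.
Qed.

Lemma conj_into_pin2_pure x y : conj_into pin2 x y -> ~ qcomm x y -> two_pure x y.
Proof.
rewrite /two_pure; case=> g g1 [px py] nS.
rewrite -(q0_rot g1 x) -(q0_rot g1 y) -(q0_rot g1 (qmul x y)) (qrotM g1).
case: px py => [sx | jx] [sy | jy].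
- by case: nS; apply/conj_into_spin2; exists g.
- by right; right; split; [case: jy | case: (spin2_jspin2_mul sx jy)].
- by right; left; split; [case: jx | case: (jspin2_spin2_mul jx sy)].
- by left; split; [case: jx | case: jy].
Qed.

Lemma conj_into_pin2_of_pure x y : qnorm2 x = 1 -> qnorm2 y = 1 -> ~ qcomm x y -> two_pure x y ->
  conj_into pin2 x y.
Proof.
move=> x1 y1 nxy [[x0 y0] | [[x0 xy0] | [y0 xy0]]].
- by have [g g1 [jx jy]] := conj_into_jspin2 x0 y0 nxy; exists g => //; split; right.
- have [g g1 [jx jxy]] : conj_into jspin2 x (qmul x y).
    by apply: conj_into_jspin2 => //; rewrite qcomm_mulr.
  exists g => //; split; first by right.
  by left; rewrite -(qmulKl x1 y) (qrotM g1) qrot_conj; apply: jspin2_mul => //; apply: jspin2_conj.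
- have [g g1 [jxy jy]] : conj_into jspin2 (qmul x y) y.
    by apply: conj_into_jspin2 => //; rewrite qcomm_mull.
  exists g => //; split; last by right.
  by left; rewrite -(qmulKr y1 x) (qrotM g1) qrot_conj; apply: jspin2_mul => //; apply: jspin2_conj.
Qed.

Lemma conj_into_pin2_not_spin2 x y : qnorm2 x = 1 -> qnorm2 y = 1 ->
  (conj_into pin2 x y /\ ~ qcomm x y) <->
  (~ qcomm x y /\ two_pure x y).
Proof.
move=> x1 y1; split=> [[pxy nxy] | [nxy h]]; split => //; first exact: conj_into_pin2_pure.
exact: conj_into_pin2_of_pure.
Qed.

End QuatRcf.

Lemma ord2 (i : 'I_2) : i = 0 \/ i = 1.
Proof. by case: i => [[|[|//]] ?]; [left | right]; apply: val_inj. Qed.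

Lemma lift02 : lift ord0 ord0 = 1 :> 'I_2. Proof. exact: val_inj. Qed.
Lemma lift12 : lift 1 ord0 = 0 :> 'I_2. Proof. exact: val_inj. Qed.

Lemma mx2P (T : Type) (M N : 'M[T]_2) :
  M 0 0 = N 0 0 -> M 0 1 = N 0 1 -> M 1 0 = N 1 0 -> M 1 1 = N 1 1 -> M = N.
Proof. by move=> *; apply/matrixP => i j; case: (ord2 i) => ->; case: (ord2 j) => ->. Qed.

Section Matrix2.
Variable T : comPzRingType.
Implicit Types M N : 'M[T]_2.

Lemma mulmx2E M N i j : (M *m N) i j = M i 0 * N 0 j + M i 1 * N 1 j.
Proof. by rewrite mxE !big_ord_recl big_ord0 addr0 lift02. Qed.

Lemma mxtrace2 M : \tr M = M 0 0 + M 1 1.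
Proof. by rewrite /mxtrace !big_ord_recl big_ord0 addr0 lift02. Qed.

Lemma det2 M : \det M = M 0 0 * M 1 1 - M 0 1 * M 1 0.
Proof.
rewrite (expand_det_row _ 0) !big_ord_recl big_ord0 addr0 /cofactor !det_mx11 !mxE /=.
by rewrite lift02 lift12 expr0 expr1; ring.
Qed.

Lemma adj2_00 M : \adj M 0 0 = M 1 1.
Proof. by rewrite !mxE /cofactor det_mx11 !mxE lift02 expr0 mul1r. Qed.

Lemma adj2_10 M : \adj M 1 0 = - M 1 0.
Proof. by rewrite !mxE /cofactor det_mx11 !mxE lift02 lift12 expr1 mulN1r. Qed.

End Matrix2.

Local Open Scope complex_scope.

Lemma complex_eq0 (R : rcfType) (a b : R) : a +i* b = 0 <-> a = 0 /\ b = 0.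
Proof. by split=> [/eqP | [-> ->] //]; rewrite eq_complex => /andP[/eqP ? /eqP]. Qed.

Lemma realc_eq0 (R : rcfType) (r : R) : r%:C = 0 <-> r = 0.
Proof. by rewrite -complexr0 complex_eq0; split=> [[] | ->]. Qed.

Section QuatMatrix.
Variable R : realType.
Implicit Types (p q x y : quat R) (M : 'M[R[i]]_2).

(* [a + b i + c j + d k] is the matrix [[a + b i, c + d i], [-c + d i, a - b i]], so that
   span{1, i} is the diagonal and span{j, k} the antidiagonal. *)
Definition qmx p : 'M[R[i]]_2 := \matrix_(i, j)
  if i == 0 then (if j == 0 then q0 p +i* q1 p else q2 p +i* q3 p)
  else (if j == 0 then (- q2 p) +i* q3 p else q0 p +i* (- q1 p)).

Lemma qmxM p q : qmx p *m qmx q = qmx (qmul p q).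
Proof.
case: p q => [a b c d] [e f g h].
by apply: mx2P; rewrite mulmx2E !mxE /=; simpc; congr Complex; ring.
Qed.

Lemma qmx1 : qmx qone = 1%:M.
Proof. by apply: mx2P; rewrite !mxE /= ?oppr0 //. Qed.

Lemma qmx_inj : injective qmx.
Proof.
case=> a b c d [e f g h] E.
have := congr1 (fun M => M 0 0) E; have := congr1 (fun M => M 0 1) E.
by rewrite !mxE /= => -[-> ->] [-> ->].
Qed.

Lemma tr_qmx p : \tr (qmx p) = (qtr p)%:C.
Proof. by rewrite mxtrace2 !mxE /=; simpc; congr Complex; rewrite /qtr /=; ring. Qed.

Lemma det_qmx p : \det (qmx p) = (qnorm2 p)%:C.
Proof. by rewrite det2 !mxE /=; simpc; congr Complex; rewrite /qnorm2 /vnorm2 /vdot; ring. Qed.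

Lemma adjmx_qmx p : adjmx (qmx p) = qmx (qconj p).
Proof. by apply: mx2P; rewrite !mxE /= ?opprK. Qed.

Lemma SU2_qmx p : SU2 (qmx p) <-> qnorm2 p = 1.
Proof.
rewrite /SU2 det_qmx adjmx_qmx qmxM qmul_conj; split=> [[_ /eqP] | p1].
  by rewrite eq_complex => /andP[/eqP].
by rewrite p1 -qmx1.
Qed.

Lemma SU2_qmxP M : SU2 M -> exists2 p, M = qmx p & qnorm2 p = 1.
Proof.
case=> MM dM; have uM : M \in unitmx by case: (mulmx1_unit MM).
have adjE : adjmx M = \adj M.
  by rewrite -[adjmx M](mulKmx uM) MM mulmx1 /invmx uM dM invr1 scale1r.
have e11 : M 1 1 = conjc (M 0 0) by rewrite -adj2_00 -adjE !mxE.
have e10 : M 1 0 = - conjc (M 0 1) by rewrite -[M 1 0]opprK -adj2_10 -adjE !mxE.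
case E0: (M 0 0) e11 => [a b] e11; case E1: (M 0 1) e10 => [c d] e10.
have eM : M = qmx (Quat a b c d) by apply: mx2P; rewrite !mxE /= ?E0 ?E1 ?e11 ?e10 //; simpc.
by exists (Quat a b c d) => //; apply/SU2_qmx; rewrite -eM.
Qed.

Lemma invmx_qmx p : qnorm2 p = 1 -> invmx (qmx p) = qmx (qconj p).
Proof.
move=> p1; have pV : qmx p *m qmx (qconj p) = 1%:M by rewrite qmxM qmulV // qmx1.
by have [up _] := mulmx1_unit pV; rewrite -[RHS](mulKmx up) pV mulmx1.
Qed.

Lemma qmx_mulmx_eq1 p M : qnorm2 p = 1 -> qmx p *m M = 1%:M -> M = qmx (qconj p).
Proof.
move=> p1 pM; have [up _] := mulmx1_unit pM.
by rewrite -(invmx_qmx p1) -[M](mulKmx up) pM mulmx1.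
Qed.

Lemma tr_qmx_eq0 p : \tr (qmx p) = 0 <-> q0 p = 0.
Proof.
rewrite tr_qmx realc_eq0 /qtr; split=> [/eqP | ->]; last by rewrite mulr0.
by rewrite mulf_eq0 pnatr_eq0 => /eqP.
Qed.

Lemma fricke_rmorph (S T : pzRingType) (f : {rmorphism S -> T}) (a b c : S) :
  f (fricke a b c) = fricke (f a) (f b) (f c).
Proof. by rewrite /fricke !(rmorph_nat, rmorphB, rmorphD, rmorphM, rmorphXn). Qed.

Lemma Spin2_std_qmx p : qnorm2 p = 1 -> Spin2_std (qmx p) <-> spin2 p.
Proof.
move=> p1; rewrite /Spin2_std SU2_qmx !mxE /= !complex_eq0.
by split=> [[_ [[h2 h3] _]] | [-> ->]] //; rewrite oppr0.
Qed.

Lemma Pin2_std_qmx p : qnorm2 p = 1 -> Pin2_std (qmx p) <-> pin2 p.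
Proof.
move=> p1; rewrite /Pin2_std (Spin2_std_qmx p1) SU2_qmx !mxE /= !complex_eq0.
split=> [[sp | [_ [[h0 h1] _]]] | [sp | [-> ->]]]; [by left | by right | by left |].
by right; rewrite oppr0.
Qed.

Section RepIs.
Variables (G : 'M[R[i]]_2 -> Prop) (P : quat R -> Prop).
Hypothesis G_qmx : forall p, qnorm2 p = 1 -> G (qmx p) <-> P p.
Hypothesis G_SU2 : forall M, G M -> SU2 M.
Hypothesis P1 : P qone.
Hypothesis PM : forall p q, P p -> P q -> P (qmul p q).
Hypothesis PV : forall p, P p -> P (qconj p).

Lemma rep_is_qmx x y : qnorm2 x = 1 -> qnorm2 y = 1 ->
  rep_is G (qmx x) (qmx y) (qmx (qconj (qmul x y))) <-> conj_into P x y.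
Proof.
move=> x1 y1; split=> [[g [/SU2_qmxP [h -> h1] img]] | [h h1 [Px Py]]].
  have rotP p : conj_copy G (qmx h) (qmx p) -> P (qrot h p).
    case=> N [GN]; have [n eN n1] := SU2_qmxP (G_SU2 GN); subst N.
    by rewrite invmx_qmx // !qmxM => /qmx_inj ->; rewrite qrotKV //; apply/G_qmx.
  by exists h => //; split; apply/rotP/img; constructor.
have img M : in_image (qmx x) (qmx y) (qmx (qconj (qmul x y))) M ->
    exists2 m, M = qmx m & qnorm2 m = 1 /\ P (qrot h m).
  elim=> [||||A B _ [m -> [m1 Pm]] _ [n -> [n1 Pn]] | A _ [m -> [m1 Pm]]].
  - by exists x.
  - by exists y.
  - exists (qconj (qmul x y)) => //; rewrite qnorm2_conj qnorm2M x1 y1 mulr1.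
    by rewrite qrot_conj qrotM //; split => //; apply/PV/PM.
  - by exists qone; rewrite ?qmx1 // qnorm2_1 qrot1r.
  - exists (qmul m n); first by rewrite qmxM.
    by rewrite qnorm2M m1 n1 mulr1 qrotM //; split => //; apply: PM.
  - exists (qconj m); first by rewrite invmx_qmx.
    by rewrite qnorm2_conj qrot_conj; split => //; apply: PV.
exists (qmx h); split; first by apply/SU2_qmx.
move=> M /img [m -> [m1 Pm]]; exists (qmx (qrot h m)); split.
  by apply/G_qmx => //; rewrite qnorm2_rot.
by rewrite invmx_qmx // !qmxM qrotK.
Qed.

End RepIs.

Lemma rep_is_Spin2_std x y : qnorm2 x = 1 -> qnorm2 y = 1 ->
  rep_is (@Spin2_std R) (qmx x) (qmx y) (qmx (qconj (qmul x y))) <-> qcomm x y.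
Proof.
move=> x1 y1; rewrite -conj_into_spin2.
exact: (rep_is_qmx Spin2_std_qmx (fun M sM => sM.1) spin2_one (@spin2_mul R) (@spin2_conj R) x1 y1).
Qed.

Lemma rep_is_Pin2_std x y : qnorm2 x = 1 -> qnorm2 y = 1 ->
  rep_is (@Pin2_std R) (qmx x) (qmx y) (qmx (qconj (qmul x y))) <-> conj_into pin2 x y.
Proof.
apply: (rep_is_qmx Pin2_std_qmx _ (or_introl spin2_one) (@pin2_mul R) (@pin2_conj R)).
by move=> M [[] | []].
Qed.

End QuatMatrix.

Theorem proposition4p1 (R : realType) (X Y Z : 'M[R[i]]_2) :
  SU2 X -> SU2 Y -> SU2 Z -> X *m Y *m Z = 1%:M ->
  let a := \tr X in let b := \tr Y in let c := \tr Z in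
  let k := a ^+ 2 + b ^+ 2 + c ^+ 2 - a * b * c - 4 in
  (rep_is (@Spin2_std R) X Y Z <-> k = 0) /\
  ((rep_is (@Pin2_std R) X Y Z /\ ~ rep_is (@Spin2_std R) X Y Z) <->
   (k <> 0 /\
    ((\tr X = 0 /\ \tr Y = 0) \/ (\tr X = 0 /\ \tr (X *m Y) = 0) \/
     (\tr Y = 0 /\ \tr (X *m Y) = 0)))).
Proof.
move=> /SU2_qmxP [x -> x1] /SU2_qmxP [y -> y1] _ XYZ.
have -> : Z = qmx (qconj (qmul x y)).
  by apply: qmx_mulmx_eq1; rewrite ?qnorm2M ?x1 ?y1 ?mulr1 // -qmxM.
move=> a b c k; have k0 : k = 0 <-> qcomm x y.
  have -> : k = (fricke (qtr x) (qtr y) (qtr (qconj (qmul x y))))%:C.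
    by rewrite /k /a /b /c !tr_qmx fricke_rmorph.
  by rewrite realc_eq0 fricke_eq0.
rewrite rep_is_Spin2_std // rep_is_Pin2_std // k0 qmxM !tr_qmx_eq0.
by split; [| exact: conj_into_pin2_not_spin2].
Qed.
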